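(* Let $G$ be a finite group and $S\le H$ subgroups of $G$ with $S\trianglelefteq G$. Let $\theta\in\mathrm{Irr}(H)$ lie above $\lambda\in\mathrm{Irr}(S)$, and let $\theta_\lambda\in\mathrm{Irr}(H(\lambda))$ be the $\lambda$-Clifford correspondent of $\theta$. If $\theta$ extends to its stabilizer $G(\theta)$ in $G$, then $\theta_\lambda$ extends to $G(\theta,\lambda)$.
   Context: $K(\phi)$ (resp. $K(\phi_1,\phi_2)$) is the stabilizer in $K$ of $\phi$ (resp. of both $\phi_1$ and $\phi_2$). The $\lambda$-Clifford correspondent $\theta_\lambda$ is the unique irreducible character of $H(\lambda)$ lying above $\lambda$ and inducing $\theta$. *)

From mathcomp Require Export all_boot all_order all_algebra all_fingroup all_solvable all_field all_character.
Set Implicit Arguments. Unset Strict Implicit. Unset Printing Implicit Defensive.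

(* Extend theta to chi on G(theta) and restrict chi to U = G(theta, lambda), which contains
   H(lambda).  Some irreducible constituent psi of chi_U lies over lambda; as U fixes
   lambda, psi_S is a multiple of lambda, so every irreducible constituent of psi_H(lambda)
   lies over lambda and under theta, hence is theta_lambda by the Clifford correspondence.
   Its multiplicity is at most [theta_H(lambda), theta_lambda] = [theta, theta] = 1 by
   Frobenius reciprocity, so psi restricts to theta_lambda. *)

Set Implicit Arguments. Unset Strict Implicit. Unset Printing Implicit Defensive.
Import GroupScope GRing.Theory Num.Theory.
Local Open Scope ring_scope.

Section ConsttRes.

Variables (gT : finGroupType) (S K U : {group gT}).

Lemma constt_Res_constt (phi : 'CF(U)) l :
    l \in irr_constt ('Res[S] phi) ->
  exists2 s, s \in irr_constt phi & l \in irr_constt ('Res[S] 'chi_s).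
Proof.
move=> lSphi; apply/exists_inP; rewrite -negb_forall_in.
apply: contraL lSphi => /forall_inP notlS.
rewrite irr_consttE negbK {1}[phi]cfun_sum_constt linear_sum cfdot_suml.
rewrite big1 // => s phi_s; rewrite linearZ cfdotZl.
by have /eqP-> := notlS s phi_s; rewrite mulr0.
Qed.

Lemma constt_Res_invariant (l : Iirr S) (s : Iirr U) :
    S <| U -> U \subset 'I['chi_l] -> l \in irr_constt ('Res[S] 'chi_s) ->
  {subset irr_constt ('Res[S] 'chi_s) <= pred1 l}.
Proof.
move=> nsSU sUI lSs j; rewrite (Clifford_Res_sum_cfclass nsSU lSs).
rewrite cfclass_invariant // big_seq1 irr_consttE cfdotZl cfdot_irr.
by rewrite mulf_eq0 negb_or pnatr_eq0 eqb0 negbK => /andP[_ /eqP->]; rewrite inE.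
Qed.

Lemma constt_Res_over_invariant (l : Iirr S) (s : Iirr U) (k : Iirr K) :
    S \subset K -> K \subset U -> S <| U -> U \subset 'I['chi_l] ->
    l \in irr_constt ('Res[S] 'chi_s) -> k \in irr_constt ('Res[K] 'chi_s) ->
  l \in irr_constt ('Res[S] 'chi_k).
Proof.
move=> sSK sKU nsSU sUI lSs kKs; have [j jSk] := constt_cfRes_irr S k.
have Ns : 'Res[K] 'chi_s \is a character by rewrite cfRes_char ?irr_char.
have := constt_Res_trans Ns kKs jSk; rewrite cfResRes // => jSs.
by have /eqP <- := constt_Res_invariant nsSU sUI lSs jSs.
Qed.

Lemma cfRes_irr_single_constt (s : Iirr U) (p : Iirr K) :
    K \subset U -> {subset irr_constt ('Res[K] 'chi_s) <= pred1 p} ->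
    '['Res[K] 'chi_s, 'chi_p] <= 1 ->
  'Res[K] 'chi_s = 'chi_p.
Proof.
move=> sKU onlyp le1.
have [k kKs] := neq0_has_constt (Res_irr_neq0 K s).
have pKs : p \in irr_constt ('Res[K] 'chi_s) by rewrite -(eqP (onlyp k kKs)).
have DsK : 'Res[K] 'chi_s = '['Res[K] 'chi_s, 'chi_p] *: 'chi_p.
  rewrite {1}['Res[K] _]cfun_sum_constt (big_pred1 p) // => j.
  by apply/idP/eqP => [/onlyp/eqP | ->].
have /natrP[n Dn] : '['Res[K] 'chi_s, 'chi_p] \in Num.nat.
  by rewrite Cnat_cfdot_char ?cfRes_char ?irr_char.
rewrite irr_consttE Dn pnatr_eq0 in pKs; rewrite Dn lern1 in le1.
by rewrite DsK Dn (_ : n = 1%N) ?scale1r //; apply/anti_leq; rewrite le1 lt0n.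
Qed.

End ConsttRes.

Lemma Clifford_correspondent_unique (gT : finGroupType) (S H : {group gT})
    (l : Iirr S) (p k : Iirr 'I_H['chi_l]) :
    S <| H -> l \in irr_constt ('Res[S] 'chi_p) ->
    l \in irr_constt ('Res[S] 'chi_k) ->
    k \in irr_constt ('Res['I_H['chi_l]] ('Ind[H] 'chi_p)) ->
  k = p.
Proof.
move=> nsSH lSp lSk kHp; have [_ _ _ uniq_constt _] := constt_Inertia_bijection l nsSH.
apply/eqP; rewrite -[_ == _](uniq_constt p) ?constt_Ind_Res //.
by rewrite inE kHp constt_Ind_Res.
Qed.

Theorem lemma6p1 (gT : finGroupType) (G H S : {group gT})
  (t : Iirr H) (l : Iirr S) (p : Iirr 'I_H['chi_l]) :
  S \subset H -> H \subset G -> S <| G ->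
  l \in irr_constt ('Res[S] 'chi_t) ->
  l \in irr_constt ('Res[S] 'chi_p) ->
  'Ind[H] 'chi_p = 'chi_t ->
  (exists c : Iirr 'I_G['chi_t], 'Res[H] 'chi_c = 'chi_t) ->
  exists c : Iirr ('I_G['chi_t] :&: 'I_G['chi_l])%G,
    'Res['I_H['chi_l]] 'chi_c = 'chi_p.
Proof.
move=> sSH sHG nsSG lSt lSp Indp [c Resc].
set T := 'I_G['chi_t]%G; set U := ('I_G['chi_t] :&: 'I_G['chi_l])%G.
set Hl := 'I_H['chi_l]%G.
have sHlH : Hl \subset H := Inertia_sub _ _.
have sHT : H \subset T := sub_Inertia _ sHG.
have sUT : U \subset T := subsetIl _ _.
have sHlU : Hl \subset U by rewrite subsetI (subset_trans sHlH sHT) setSI.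
have sSHl : S \subset Hl := sub_Inertia _ sSH.
have nsSU : S <| U.
  exact: normalS (subset_trans sSHl sHlU) (subset_trans sUT (Inertia_sub _ _)) nsSG.
have sUI : U \subset 'I['chi_l] := subset_trans (subsetIr _ _) (subsetIr _ _).
have ResUc : 'Res[Hl] ('Res[U] 'chi_c) = 'Res[Hl] 'chi_t.
  by rewrite cfResRes // -(cfResRes _ sHlH sHT) Resc.
have [s sUs lSs] : exists2 s, s \in irr_constt ('Res[U] 'chi_c)
                            & l \in irr_constt ('Res[S] 'chi_s).
  apply: constt_Res_constt.
  by rewrite cfResRes ?(subset_trans sSHl) // -(cfResRes _ sSH sHT) Resc.
have Nc : 'Res[U] 'chi_c \is a character by rewrite cfRes_char ?irr_char.
have onlyp : {subset irr_constt ('Res[Hl] 'chi_s) <= pred1 p}.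
  move=> k kHls; rewrite inE; apply/eqP.
  apply: (Clifford_correspondent_unique (normalS sSH sHG nsSG) lSp).
    exact: constt_Res_over_invariant lSs kHls.
  by rewrite Indp -ResUc (constt_Res_trans Nc sUs).
have le1 : '['Res[Hl] 'chi_s, 'chi_p] <= 1.
  have := cfdot_Res_ge_constt p Nc sUs.
  by rewrite ResUc (cfdot_Res_l 'chi_t) Indp cfnorm_irr.
by exists s; apply: cfRes_irr_single_constt onlyp le1.
Qed.
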